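(* For a triplet $P=(T,I,F)$ of nonempty intervals contained in $[0,1]$, with $T^L=\inf T$, $T^U=\sup T$ and similarly $I^L,I^U,F^L,F^U$, define Zhang's interval functions $$s^{Z}(P)=[T^L+2-I^U-F^U,\ T^U+2-I^L-F^L],$$ $$a^{Z}(P)=[\min\{T^L-F^L,T^U-F^U\},\ \max\{T^L-F^L,T^U-F^U\}],\qquad c^{Z}(P)=[T^L,T^U],$$ and the real-valued functions $$s(P)=\frac{4+T^L+T^U-I^L-I^U-F^L-F^U}{6},\quad a(P)=\frac{T^L+T^U-F^L-F^U}{2},\quad c(P)=\frac{T^L+T^U}{2}.$$ Rank intervals by their midpoints (a ranking equivalent to Xu and Da's possibility-degree ranking). Then for any two such triplets $P_1,P_2$ and each pair $(f^{Z},f)\in\{(s^Z,s),(a^Z,a),(c^Z,c)\}$: the midpoint of $f^Z(P_1)$ is greater than, less than, or equal to the midpoint of $f^Z(P_2)$ if and only if $f(P_1)$ is respectively greater than, less than, or equal to $f(P_2)$. Consequently, ranking interval neutrosophic triplets lexicographically by $(s^Z,a^Z,c^Z)$ (with intervals compared via midpoints) gives the same result as ranking them lexicographically by $(s,a,c)$.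
   Context: $s^Z,a^Z,c^Z$ are the interval neutrosophic score, accuracy and certainty functions of Hong-yu Zhang, Jian-qiang Wang and Xiao-hong Chen; $s,a,c$ are the paper's new interval neutrosophic score, accuracy and certainty functions. The midpoint of an interval with endpoints $u\le v$ is $(u+v)/2$. *)

From HB Require Import structures.
From mathcomp Require Import all_boot all_order all_algebra.
Set Implicit Arguments. Unset Strict Implicit. Unset Printing Implicit Defensive.
Import Order.TTheory GRing.Theory Num.Theory.
Local Open Scope ring_scope.

(* An interval is given by its endpoints (inf, sup) = (L, U). *)
Definition ivl (R : realFieldType) := (R * R)%type.

Definition ivl01 (R : realFieldType) (x : ivl R) : Prop :=
  0 <= x.1 /\ x.1 <= x.2 /\ x.2 <= 1.

Definition mid (R : realFieldType) (x : ivl R) : R := (x.1 + x.2) / 2.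

Record INT (R : realFieldType) := MkINT { Tm : ivl R; Im : ivl R; Fm : ivl R }.

Definition validINT (R : realFieldType) (P : INT R) : Prop :=
  ivl01 (Tm P) /\ ivl01 (Im P) /\ ivl01 (Fm P).

Definition sZ (R : realFieldType) (P : INT R) : ivl R :=
  ((Tm P).1 + 2 - (Im P).2 - (Fm P).2, (Tm P).2 + 2 - (Im P).1 - (Fm P).1).
Definition aZ (R : realFieldType) (P : INT R) : ivl R :=
  (Num.min ((Tm P).1 - (Fm P).1) ((Tm P).2 - (Fm P).2),
   Num.max ((Tm P).1 - (Fm P).1) ((Tm P).2 - (Fm P).2)).
Definition cZ (R : realFieldType) (P : INT R) : ivl R :=
  ((Tm P).1, (Tm P).2).

Definition sN (R : realFieldType) (P : INT R) : R :=
  (4 + (Tm P).1 + (Tm P).2 - (Im P).1 - (Im P).2 - (Fm P).1 - (Fm P).2) / 6.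
Definition aN (R : realFieldType) (P : INT R) : R :=
  ((Tm P).1 + (Tm P).2 - (Fm P).1 - (Fm P).2) / 2.
Definition cN (R : realFieldType) (P : INT R) : R :=
  ((Tm P).1 + (Tm P).2) / 2.

Definition same_rank (R : realFieldType) (x1 x2 y1 y2 : R) : Prop :=
  (x1 > x2 <-> y1 > y2) /\ (x1 < x2 <-> y1 < y2) /\ (x1 = x2 <-> y1 = y2).

Definition lexlt3 (R : realFieldType) (x y : R * R * R) : Prop :=
  x.1.1 < y.1.1 \/
  (x.1.1 = y.1.1 /\ (x.1.2 < y.1.2 \/ (x.1.2 = y.1.2 /\ x.2 < y.2))).

Definition keyZ (R : realFieldType) (P : INT R) : R * R * R :=
  (mid (sZ P), mid (aZ P), mid (cZ P)).
Definition keyN (R : realFieldType) (P : INT R) : R * R * R :=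
  (sN P, aN P, cN P).

From HB Require Import structures.
From mathcomp Require Import all_boot all_order all_algebra.
From mathcomp Require Import ring.
Import Order.TTheory GRing.Theory Num.Theory.
Local Open Scope ring_scope.

(* The midpoint of each of Zhang's intervals is a positive multiple of the
   corresponding new function: mid s^Z = 3 s, mid a^Z = a, mid c^Z = c.
   A positive scaling preserves the comparison of two reals, and a
   lexicographic order only depends on the comparisons of the coordinates. *)

Section Ranking.
Variable R : realFieldType.
Implicit Types (P : INT R) (k a b : R) (x y u v : R * R * R).

Lemma mid_sZ P : mid (sZ P) = 3 * sN P.
Proof. by rewrite /mid /sZ /sN /=; field. Qed.

Lemma mid_aZ P : mid (aZ P) = aN P.
Proof. by rewrite /mid /aZ /aN /= addr_min_max; ring. Qed.

Lemma same_rank_refl a b : same_rank a b a b.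
Proof. by do !split. Qed.

Lemma same_rank_pMl k a b : 0 < k -> same_rank (k * a) (k * b) a b.
Proof.
move=> k_gt0; rewrite /same_rank !ltr_pM2l //.
by do 2!split=> //; split=> [/(mulfI (lt0r_neq0 k_gt0))|->].
Qed.

Lemma lexlt3_same_rank x y u v :
  same_rank x.1.1 y.1.1 u.1.1 v.1.1 ->
  same_rank x.1.2 y.1.2 u.1.2 v.1.2 ->
  same_rank x.2 y.2 u.2 v.2 ->
  lexlt3 x y <-> lexlt3 u v.
Proof. by rewrite /same_rank /lexlt3; tauto. Qed.

Lemma eq3_same_rank x y u v :
  same_rank x.1.1 y.1.1 u.1.1 v.1.1 ->
  same_rank x.1.2 y.1.2 u.1.2 v.1.2 ->
  same_rank x.2 y.2 u.2 v.2 ->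
  x = y <-> u = v.
Proof.
case: x y u v => [[a b] c] [[d e] f] [[a' b'] c'] [[d' e'] f'] /=.
move=> [_ [_ Ea]] [_ [_ Eb]] [_ [_ Ec]].
by split=> [[/Ea -> /Eb -> /Ec ->]|[/Ea -> /Eb -> /Ec ->]].
Qed.

End Ranking.

Theorem theorem10p5 (R : realFieldType) (P1 P2 : INT R) :
  validINT P1 -> validINT P2 ->
  (same_rank (mid (sZ P1)) (mid (sZ P2)) (sN P1) (sN P2) /\
   same_rank (mid (aZ P1)) (mid (aZ P2)) (aN P1) (aN P2) /\
   same_rank (mid (cZ P1)) (mid (cZ P2)) (cN P1) (cN P2)) /\
  [/\ (lexlt3 (keyZ P1) (keyZ P2) <-> lexlt3 (keyN P1) (keyN P2)),
      (lexlt3 (keyZ P2) (keyZ P1) <-> lexlt3 (keyN P2) (keyN P1)) &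
      (keyZ P1 = keyZ P2 <-> keyN P1 = keyN P2)].
Proof.
move=> _ _.
have rank_s P Q : same_rank (mid (sZ P)) (mid (sZ Q)) (sN P) (sN Q).
  by rewrite !mid_sZ; apply: same_rank_pMl.
have rank_a P Q : same_rank (mid (aZ P)) (mid (aZ Q)) (aN P) (aN Q).
  by rewrite !mid_aZ; apply: same_rank_refl.
have rank_c P Q : same_rank (mid (cZ P)) (mid (cZ Q)) (cN P) (cN Q).
  exact: same_rank_refl.
split; first by [].
split; [apply: lexlt3_same_rank | apply: lexlt3_same_rank
       | apply: eq3_same_rank].
all: by [apply: rank_s | apply: rank_a | apply: rank_c].
Qed.
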